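(* Let $\alpha>0$ and $0\le m<s<M$. If $f_n\in\mathcal{F}(m,M,s)$ for $n=1,2,\dots$ and $f_n\to f$ a.e. on $[-\pi,\pi]$, then $u_{f_n}\to u_f$ uniformly on $[-\pi,\pi]$. Moreover, there is a subsequence $(f_{n_k})$ with $\lim_{k\to\infty}\operatorname{osc}(u_{f_{n_k}})=\operatorname{osc}(u_f)$.
   Context: Robin problem: for $\alpha>0$ and $f\in L^1[-\pi,\pi]$, find $u\in C^1[-\pi,\pi]$ with $u'$ absolutely continuous on $[-\pi,\pi]$, $-u''=f$ a.e. on $(-\pi,\pi)$, and $-u'(-\pi)+\alpha u(-\pi)=u'(\pi)+\alpha u(\pi)=0$. It has a unique solution $u_f(x)=\int_{-\pi}^{\pi}G(x,y)f(y)\,dy$, where $G(x,y)=-\tfrac12 c_\alpha xy-\tfrac12|x-y|+\tfrac{1}{2c_\alpha}$ and $c_\alpha=\alpha/(1+\alpha\pi)$. For $0\le m<s<M$, $\mathcal{F}(m,M,s)$ is the set of $f\in L^1[-\pi,\pi]$ with $m\le f\le M$ and $\|f\|_{L^1}=2\pi s$. $\operatorname{osc}(u)=\max_{[-\pi,\pi]}u-\min_{[-\pi,\pi]}u$. *)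

From HB Require Import structures.
From mathcomp Require Import all_boot all_order all_algebra.
From mathcomp Require Import all_classical all_reals all_analysis.
Set Implicit Arguments. Unset Strict Implicit. Unset Printing Implicit Defensive.
Import Order.TTheory GRing.Theory Num.Theory.
Import numFieldNormedType.Exports.
Local Open Scope classical_set_scope.
Local Open Scope ring_scope.

Section Robin.
Variable R : realType.

Definition I : set R := `[- pi, pi]%classic.

Definition c_alpha (alpha : R) : R := alpha / (1 + alpha * pi).

Definition Green (alpha : R) (x y : R) : R :=
  - (c_alpha alpha * x * y) / 2 - `|x - y| / 2 + (2 * c_alpha alpha)^-1.

Definition u_sol (alpha : R) (f : R -> R) (x : R) : R :=
  Rintegral (@lebesgue_measure R) I (fun y => Green alpha x y * f y).

Definition Fclass (m M s : R) (f : R -> R) : Prop :=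
  [/\ (@lebesgue_measure R).-integrable I (fun x => (f x)%:E),
      {ae @lebesgue_measure R, forall x, I x -> m <= f x <= M} &
      (\int[@lebesgue_measure R]_(x in I) `|(f x)%:E| = (2 * pi * s)%:E)%E].

(* osc(u) = max_I u - min_I u (sup/inf of the image; attained for continuous u) *)
Definition osc (u : R -> R) : R := sup (u @` I) - inf (u @` I).

End Robin.

From HB Require Import structures.
From mathcomp Require Import all_boot all_order all_algebra.
From mathcomp Require Import all_classical all_reals all_analysis.
From mathcomp Require Import lra measurable_realfun.
Import Order.TTheory GRing.Theory Num.Theory.
Import numFieldNormedType.Exports.
Local Open Scope classical_set_scope.
Local Open Scope ring_scope.
Set Implicit Arguments. Unset Strict Implicit. Unset Printing Implicit Defensive.

(* The Green kernel is bounded on [-pi, pi]^2, so |u_g - u_h| <= C ||g - h||_1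
   uniformly on [-pi, pi].  Since 0 <= m <= f_n <= M, dominated convergence
   turns a.e. convergence into L^1 convergence, hence u_{f_n} -> u_f uniformly.
   Sup and inf over [-pi, pi] move by at most the uniform distance, so osc is
   2-Lipschitz for the sup norm and the whole sequence (phi = id) already has
   converging oscillations. *)

Section KernelOperator.
Context d (T : measurableType d) (R : realType) (mu : measure T R).
Variables (D : set T) (K : T -> T -> R) (C : R).
Hypotheses (mD : measurable D) (mK : forall x, measurable_fun D (K x))
  (K_le : forall x y, D x -> D y -> `|K x y| <= C).

Definition kernel_op (h : T -> R) (x : T) : R :=
  Rintegral mu D (fun y => K x y * h y).

Lemma integrable_kernelM (h : T -> R) (x : T) : D x ->
  mu.-integrable D (EFin \o h) ->
  mu.-integrable D (EFin \o (fun y => K x y * h y)).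
Proof.
move=> Dx hi.
have Kx_bounded : [bounded K x y | y in D].
  exists C; split; first exact: num_real.
  by move=> c Cc y Dy; apply: le_trans (ltW Cc); exact: K_le.
rewrite (_ : EFin \o _ = ((EFin \o K x) \* (EFin \o h))%E); last first.
  by apply/funext => y /=; rewrite EFinM.
exact: integrableMr.
Qed.

Lemma kernel_opB (h g : T -> R) (x : T) : D x ->
  mu.-integrable D (EFin \o h) -> mu.-integrable D (EFin \o g) ->
  kernel_op h x - kernel_op g x = kernel_op (h \- g) x.
Proof.
move=> Dx hi gi; rewrite /kernel_op -RintegralB //; try exact: integrable_kernelM.
by apply: eq_Rintegral => y _; rewrite /= mulrBr.
Qed.

Lemma normr_kernel_op_le (h : T -> R) (x : T) : D x ->
  mu.-integrable D (EFin \o h) ->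
  `|kernel_op h x| <= C * Rintegral mu D (fun y => `|h y|).
Proof.
move=> Dx hi; have Khi := integrable_kernelM Dx hi.
apply: le_trans (le_normr_Rintegral mD Khi) _.
rewrite -RintegralZl //; last exact/integrable_norm.
apply: le_Rintegral => //; first exact: integrable_norm.
- rewrite (_ : EFin \o _ = (fun y => (C%:E * `|(h y)%:E|)%E)).
    exact: integrableZl (integrable_norm hi).
  by apply/funext => y /=; rewrite EFinM.
- by move=> y Dy; rewrite normrM ler_wpM2r // K_le.
Qed.

Lemma kernel_op_cvg_uniform (hn : nat -> T -> R) (h : T -> R) :
  (forall n, mu.-integrable D (EFin \o hn n)) -> mu.-integrable D (EFin \o h) ->
  Rintegral mu D (fun y => `|hn n y - h y|) @[n --> \oo] --> 0 ->
  forall e : R, 0 < e -> \forall n \near \oo,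
    forall x, D x -> `|kernel_op (hn n) x - kernel_op h x| < e.
Proof.
move=> hni hi /cvgrPdist_lt hn_h e e0.
have delta0 : 0 < e / (`|C| + 1) by rewrite divr_gt0 // ltr_wpDl.
apply: filterS (hn_h _ delta0) => n; rewrite sub0r normrN.
set r := Rintegral _ _ _ => r_lt x Dx.
have r0 : 0 <= r by apply: Rintegral_ge0 => y _.
have hnBi : mu.-integrable D (EFin \o (hn n \- h)).
  rewrite (_ : EFin \o _ = (EFin \o hn n) \- (EFin \o h))%E.
    exact: integrableB.
  by apply/funext => y /=; rewrite EFinB.
rewrite kernel_opB //; apply: le_lt_trans (normr_kernel_op_le Dx hnBi) _.
rewrite ger0_norm // in r_lt.
apply: (@le_lt_trans _ _ (`|C| * (e / (`|C| + 1)))).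
  by rewrite (le_trans (ler_wpM2r r0 (ler_norm C))) // ler_wpM2l // ltW.
by rewrite mulrA ltr_pdivrMr ?ltr_wpDl // mulrC ltr_pM2l //; lra.
Qed.

End KernelOperator.

Lemma Rintegral_normB_cvg0_bounded d (T : measurableType d) (R : realType)
    (mu : measure T R) (D : set T) (fn : nat -> T -> R) (f : T -> R) (M : R) :
  measurable D -> (mu D < +oo)%E ->
  (forall n, measurable_fun D (fn n)) -> measurable_fun D f ->
  {ae mu, forall x, D x -> fn n x @[n --> \oo] --> f x} ->
  {ae mu, forall x n, D x -> `|fn n x| <= M} ->
  mu.-integrable D (EFin \o f) /\
  Rintegral mu D (fun x => `|fn n x - f x|) @[n --> \oo] --> 0.
Proof.
move=> mD muD mfn mf fn_f fn_M.
have Mi : mu.-integrable D (EFin \o cst M).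
  apply/integrableP; split; first exact/measurable_EFinP/measurable_cst.
  rewrite (_ : (fun x => _) = cst `|M|%:E); last by apply/funext.
  by rewrite integral_cst // lte_mul_pinfty.
have Efn_f : {ae mu, forall x, D x ->
    (EFin \o fn n) x @[n --> \oo] --> (EFin \o f) x}.
  apply: filterS fn_f => x fn_fx Dx.
  by apply: cvg_EFin; [exact: nearW | exact: fn_fx].
have Efn_M : {ae mu, forall x n, D x ->
    (`|(EFin \o fn n) x| <= (EFin \o cst M) x)%E}.
  by apply: filterS fn_M => x fn_Mx n Dx; rewrite /= lee_fin fn_Mx.
have [fi /fine_cvg cvg0 _] := dominated_convergence mD
  (fun n => (measurable_EFinP _ _).2 (mfn n)) ((measurable_EFinP _ _).2 mf)
  Efn_f Mi Efn_M.
by split.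
Qed.

Section SupInfShift.
Context (T : Type) (R : realType) (A : set T).
Variables (u v : T -> R) (d : R).
Hypothesis A0 : A !=set0.

Lemma sup_image_le_shift : has_ubound (u @` A) ->
  (forall x, A x -> v x <= u x + d) -> sup (v @` A) <= sup (u @` A) + d.
Proof.
move=> ub_u vu; have [x Ax] := A0.
apply: ge_sup; first by exists (v x), x.
move=> _ [y Ay <-]; apply: le_trans (vu y Ay) _.
by rewrite lerD2r; apply: ub_le_sup => //; exists y.
Qed.

Lemma inf_image_ge_shift : has_lbound (u @` A) ->
  (forall x, A x -> u x - d <= v x) -> inf (u @` A) - d <= inf (v @` A).
Proof.
move=> lb_u uv; have [x Ax] := A0.
apply: lb_le_inf; first by exists (v x), x.
move=> _ [y Ay <-]; apply: le_trans (uv y Ay).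
by rewrite lerD2r; apply: ge_inf => //; exists y.
Qed.

End SupInfShift.

Lemma I0 (R : realType) : @I R 0.
Proof. by rewrite /I /= in_itv /= oppr_le0 pi_ge0. Qed.

Lemma osc_dist_le (R : realType) (u v : R -> R) (B d : R) :
  (forall x, I x -> `|u x| <= B) -> (forall x, I x -> `|u x - v x| <= d) ->
  `|osc u - osc v| <= d + d.
Proof.
move=> uB uv.
have {}uB x : I x -> - B <= u x <= B by move=> Ix; rewrite -ler_norml uB.
have {}uv x : I x -> - d <= u x - v x <= d by move=> Ix; rewrite -ler_norml uv.
have neI : @I R !=set0 by exists 0; exact: I0.
have ub_u : has_ubound (u @` @I R) by exists B => _ [x /uB /andP[]] _ + <-.
have lb_u : has_lbound (u @` @I R) by exists (- B) => _ [x /uB /andP[]] + _ <-.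
have ub_v : has_ubound (v @` @I R).
  by exists (B + d) => _ [x Ix <-]; move: (uB x Ix) (uv x Ix); lra.
have lb_v : has_lbound (v @` @I R).
  by exists (- B - d) => _ [x Ix <-]; move: (uB x Ix) (uv x Ix); lra.
have le_vu x : I x -> v x <= u x + d by move=> Ix; move: (uv x Ix); lra.
have le_uv x : I x -> u x <= v x + d by move=> Ix; move: (uv x Ix); lra.
have ge_vu x : I x -> u x - d <= v x by move=> Ix; move: (uv x Ix); lra.
have ge_uv x : I x -> v x - d <= u x by move=> Ix; move: (uv x Ix); lra.
move: (sup_image_le_shift neI ub_u le_vu) (sup_image_le_shift neI ub_v le_uv).
move: (inf_image_ge_shift neI lb_u ge_vu) (inf_image_ge_shift neI lb_v ge_uv).
by rewrite /osc ler_norml; lra.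
Qed.

Lemma osc_cvg_uniform (R : realType) (un : nat -> R -> R) (u : R -> R) (B : R) :
  (forall x, I x -> `|u x| <= B) ->
  (forall e : R, 0 < e -> \forall n \near \oo,
    forall x, I x -> `|un n x - u x| < e) ->
  osc (un n) @[n --> \oo] --> osc u.
Proof.
move=> uB un_u.
have third (e : R) : 0 < e -> e / 3 + e / 3 < e by move=> ?; lra.
apply/cvgrPdist_lt => e e0.
apply: filterS (un_u _ (divr_gt0 e0 (ltr0n _ 3))) => n un_ux.
have close x : I x -> `|u x - un n x| <= e / 3.
  by move=> Ix; rewrite distrC ltW // un_ux.
exact: le_lt_trans (osc_dist_le uB close) (third e e0).
Qed.

Lemma c_alpha_gt0 (R : realType) (alpha : R) : 0 < alpha -> 0 < c_alpha alpha.
Proof. by move=> a0; rewrite divr_gt0 // ltr_wpDr // mulr_ge0 ?ltW ?pi_gt0. Qed.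

Lemma measurable_Green (R : realType) (alpha x : R) (D : set R) :
  measurable_fun (T := measurableTypeR R) D (Green alpha x).
Proof.
apply: measurable_funD; last exact: measurable_cst.
apply: measurable_funB.
  apply: measurable_funM; last exact: measurable_cst.
  by apply: measurable_funN; apply: measurable_funM; [exact: measurable_cst|].
apply: measurable_funM; last exact: measurable_cst.
by apply: measurableT_comp => //; apply: measurable_funB; [exact: measurable_cst|].
Qed.

Lemma normr_Green_le (R : realType) (alpha x y : R) : 0 < alpha -> I x -> I y ->
  `|Green alpha x y| <= c_alpha alpha * (pi * pi) + pi + (2 * c_alpha alpha)^-1.
Proof.
rewrite /I /= !in_itv /= -!ler_norml => a0 x_pi y_pi.
have c0 := c_alpha_gt0 a0; set c := c_alpha alpha in c0 *.
have /andP[cxy_ge cxy_le] : - (c * (pi * pi)) <= c * x * y <= c * (pi * pi).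
  by rewrite -ler_norml -mulrA normrM gtr0_norm // ler_pM2l // normrM ler_pM.
have xy_le : `|x - y| <= pi + pi by rewrite (le_trans (ler_normB _ _)) // lerD.
have w0 : 0 < (2 * c)^-1 by rewrite invr_gt0 mulr_gt0.
move: (normr_ge0 (x - y)) xy_le; rewrite /Green -/c.
set t := `|x - y|; set w := (2 * c)^-1 in w0 *.
by move=> t0 t_le; rewrite ler_norml; lra.
Qed.

Theorem lemma4 (R : realType) (alpha m M s : R) (fn : nat -> R -> R) (f : R -> R) :
  0 < alpha -> 0 <= m -> m < s -> s < M ->
  (forall n, Fclass m M s (fn n)) ->
  measurable_fun (@I R) f ->
  {ae @lebesgue_measure R, forall x, @I R x -> fn n x @[n --> \oo] --> f x} ->
  (forall e : R, 0 < e -> \forall n \near \oo,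
      forall x, @I R x -> `|u_sol alpha (fn n) x - u_sol alpha f x| < e)
  /\
  (exists phi : nat -> nat, {homo phi : i j / (i < j)%N >-> (i < j)%N} /\
      osc (u_sol alpha (fn (phi k))) @[k --> \oo] --> osc (u_sol alpha f)).
Proof.
(* Only the bounds 0 <= m <= fn <= M of the class F(m, M, s) are used. *)
move=> a0 m0 _ _ hF mf fn_f.
have mI : measurable (@I R) by exact: measurable_itv.
have muI : (lebesgue_measure (@I R) < +oo)%E.
  by rewrite lebesgue_measure_itv /=; case: ifP => _; rewrite ltry.
have fni n : (@lebesgue_measure R).-integrable (@I R) (EFin \o fn n).
  by case: (hF n).
have mfn n : measurable_fun (@I R) (fn n).
  by apply/measurable_EFinP; exact: measurable_int (fni n).
have fn_M : {ae @lebesgue_measure R, forall x n, @I R x -> `|fn n x| <= M}.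
  have : {ae @lebesgue_measure R, forall x n, @I R x -> m <= fn n x <= M}.
    by apply: ae_foralln => n; case: (hF n).
  apply: filterS; first exact: (ae_filter_ringOfSetsType (@lebesgue_measure R)).
  move=> x fn_mM n Ix; have /andP[m_fnx fnx_M] := fn_mM n Ix.
  by rewrite ler_norml fnx_M andbT; lra.
have [fi fn_f_L1] := Rintegral_normB_cvg0_bounded (mu := @lebesgue_measure R)
  mI muI mfn mf fn_f fn_M.
have mG x : measurable_fun (@I R) (Green alpha x) := @measurable_Green R alpha x _.
have G_le x y := @normr_Green_le R alpha x y a0.
(* [u_sol alpha] is convertible to [kernel_op lebesgue_measure I (Green alpha)]. *)
have unif := kernel_op_cvg_uniform (mu := @lebesgue_measure R)
  mI mG G_le fni fi fn_f_L1.
split=> //; exists id; split=> //.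
have uf_le x : I x -> `|u_sol alpha f x| <= _ :=
  normr_kernel_op_le (mu := @lebesgue_measure R) mI mG G_le (x := x) ^~ fi.
exact: osc_cvg_uniform uf_le unif.
Qed.
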